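(* Let $V$ and $W$ be finite-dimensional real inner-product spaces and $T:V\to W$ a linear map. Let $(T_k)$ be a sequence of geometric functions $V\to W$ converging to $T$, and suppose there is a real number $p>0$ such that for every $k$, $T_k$ has a conformality factor $r_k$ with $p\le r_k$. Then there exists $K$ such that $\mathrm{rank}(T_k)=\mathrm{rank}(T)$ for all $k>K$.
   Context: A linear map $S:V\to W$ between real inner-product spaces is a geometric function if there exist a subspace $C\subset V$ with $V=\ker S\oplus C$ and a number $r>0$ such that $\langle S u,S v\rangle=r\langle u,v\rangle$ for all $u,v\in C$; $r$ is called a conformality factor of $S$ and $C$ a Conf subspace. Convergence is with respect to the operator norm on linear maps $V\to W$. *)

(* Finite-dimensional real inner-product spaces are modelled as
   row-vector spaces 'rV[R]_n equipped with an ARBITRARY inner product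
   <u,v>_A = u *m A *m v^T, A symmetric positive definite.
   Linear maps V -> W are matrices S : 'M_(n,m) acting by u |-> u *m S. *)
From HB Require Import structures.
From mathcomp Require Import all_boot all_order all_algebra.
From mathcomp Require Import reals.
Set Implicit Arguments. Unset Strict Implicit. Unset Printing Implicit Defensive.
Import Order.TTheory GRing.Theory Num.Theory.
Local Open Scope ring_scope.

Definition ip (R : realType) (n : nat) (A : 'M[R]_n) (u v : 'rV[R]_n) : R :=
  (u *m A *m v^T) 0 0.

Definition is_inner_product (R : realType) (n : nat) (A : 'M[R]_n) : Prop :=
  A^T = A /\ forall u : 'rV[R]_n, u != 0 -> 0 < ip A u u.

Definition ipnorm (R : realType) (n : nat) (A : 'M[R]_n) (u : 'rV[R]_n) : R :=
  Num.sqrt (ip A u u).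

Definition conf_subspace (R : realType) (n m : nat) (A : 'M[R]_n) (B : 'M[R]_m)
    (S : 'M[R]_(n, m)) (C : 'M[R]_n) (r : R) : Prop :=
  [/\ (kermx S + C :=: 1%:M)%MS, mxdirect (kermx S + C)%MS & 
      forall u v : 'rV[R]_n, (u <= C)%MS -> (v <= C)%MS ->
        ip B (u *m S) (v *m S) = r * ip A u v].

Definition conformality_factor (R : realType) (n m : nat) (A : 'M[R]_n)
    (B : 'M[R]_m) (S : 'M[R]_(n, m)) (r : R) : Prop :=
  0 < r /\ exists C : 'M[R]_n, conf_subspace A B S C r.

Definition geometric (R : realType) (n m : nat) (A : 'M[R]_n) (B : 'M[R]_m)
    (S : 'M[R]_(n, m)) : Prop :=
  exists r : R, conformality_factor A B S r.

Definition opnorm_le (R : realType) (n m : nat) (A : 'M[R]_n) (B : 'M[R]_m)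
    (D : 'M[R]_(n, m)) (e : R) : Prop :=
  forall u : 'rV[R]_n, ipnorm B (u *m D) <= e * ipnorm A u.

Definition op_converges (R : realType) (n m : nat) (A : 'M[R]_n) (B : 'M[R]_m)
    (Tk : nat -> 'M[R]_(n, m)) (T : 'M[R]_(n, m)) : Prop :=
  forall e : R, 0 < e -> exists N : nat, forall k : nat, (N <= k)%N ->
    opnorm_le A B (Tk k - T) e.

(* Rank is lower semicontinuous: when S is close to T, the map pinvmx T *m S
   is injective on the row space of T, so rank T <= rank S. Conversely, a Conf
   subspace C of T_k has dimension rank T_k, and a vector v of C in ker T
   satisfies p |v|^2 <= r_k |v|^2 = |T_k v|^2 = |(T_k - T) v|^2 <= e^2 |v|^2,
   so C meets ker T trivially as soon as e^2 < p; hence rank T_k <= rank T. *)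
From HB Require Import structures.
From mathcomp Require Import all_boot all_order all_algebra.
From mathcomp Require Import reals.
From mathcomp Require Import lra zify.
Import Order.TTheory GRing.Theory Num.Theory.
Local Open Scope ring_scope.

Lemma mul_le_of_sqr_le (R : realFieldType) (x y D : R) :
  x ^+ 2 <= D -> y ^+ 2 <= D -> x * y <= D.
Proof. by move=> hx hy; have := sqr_ge0 (x - y); rewrite sqrrB; lra. Qed.

Lemma exists_sqr_lt {R : rcfType} {p : R} : 0 < p -> exists2 e, 0 < e & e ^+ 2 < p.
Proof.
move=> p_gt0; exists (Num.sqrt p / 2); first by rewrite divr_gt0 ?sqrtr_gt0.
by rewrite expr_div_n sqr_sqrtr ?ltW // ltr_pdivrMr //; lra.
Qed.

Section InnerProduct.
Context {R : realType} {n : nat} {A : 'M[R]_n}.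

Lemma ipDl u v w : ip A (u + v) w = ip A u w + ip A v w.
Proof. by rewrite /ip !mulmxDl mxE. Qed.

Lemma ipZl a u w : ip A (a *: u) w = a * ip A u w.
Proof. by rewrite /ip -!scalemxAl mxE. Qed.

Lemma ipNl u w : ip A (- u) w = - ip A u w.
Proof. by rewrite -scaleN1r ipZl mulN1r. Qed.

Lemma ip0r u : ip A u 0 = 0.
Proof. by rewrite /ip trmx0 mulmx0 mxE. Qed.

Hypothesis hA : is_inner_product A.

Lemma ipC u v : ip A u v = ip A v u.
Proof.
rewrite /ip; transitivity ((u *m A *m v^T)^T 0 0); first by rewrite [RHS]mxE.
by rewrite !trmx_mul trmxK hA.1 mulmxA.
Qed.

Lemma ipDr u v w : ip A w (u + v) = ip A w u + ip A w v.
Proof. by rewrite !(ipC w) ipDl. Qed.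

Lemma ipZr a u w : ip A w (a *: u) = a * ip A w u.
Proof. by rewrite !(ipC w) ipZl. Qed.

Lemma ipNr u w : ip A w (- u) = - ip A w u.
Proof. by rewrite !(ipC w) ipNl. Qed.

Lemma ipxx_ge0 u : 0 <= ip A u u.
Proof.
by have [->|/hA.2/ltW //] := eqVneq u 0; rewrite ip0r.
Qed.

Lemma ipxx_le0 u : (ip A u u <= 0) = (u == 0).
Proof.
apply/idP/eqP => [|->]; last by rewrite ip0r.
by apply: contraTeq => /hA.2; rewrite -ltNge.
Qed.

Lemma ip_CauchySchwarz u w : ip A u w ^+ 2 <= ip A u u * ip A w w.
Proof.
have [->|/hA.2 c_gt0] := eqVneq w 0; first by rewrite !ip0r expr0n mulr0.
set a := ip A u u in c_gt0 *; set b := ip A u w; set c := ip A w w in c_gt0 *.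
set t := b / c; have tc : t * c = b by rewrite divfK ?gt_eqF.
have := ipxx_ge0 (u - t *: w).
rewrite ipDl ipNl ipZl !ipDr !ipNr !ipZr (ipC w u) -/a -/b -/c => h.
by clearbody t; rewrite -tc in h *; nra.
Qed.

Lemma gram_unit : A \in unitmx.
Proof.
rewrite -row_free_unit; apply: inj_row_free => v vA0.
by apply/eqP; rewrite -ipxx_le0 /ip vA0 mul0mx mxE.
Qed.

(* Each coordinate is an inner product with a dual basis vector. *)
Lemma coord_sqr_le :
  exists2 d, 0 <= d & forall (u : 'rV[R]_n) i, u 0 i ^+ 2 <= d * ip A u u.
Proof.
pose w i : 'rV[R]_n := (invmx A *m delta_mx i 0)^T.
have ip_w u i : ip A u (w i) = u 0 i.
  by rewrite /ip /w trmxK mulmxA (mulmxK gram_unit) -colE mxE.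
exists (\sum_i ip A (w i) (w i)) => [|u i].
  by apply: sumr_ge0 => i _; apply: ipxx_ge0.
rewrite -ip_w mulrC; apply: le_trans (ip_CauchySchwarz _ _) _.
apply: ler_wpM2l; first exact: ipxx_ge0.
by rewrite (bigD1 i) //= lerDl; apply: sumr_ge0 => j _; apply: ipxx_ge0.
Qed.

Lemma quad_form_le (M : 'M[R]_n) :
  exists2 c, 0 <= c & forall v : 'rV[R]_n, (v *m M *m v^T) 0 0 <= c * ip A v v.
Proof.
have [d d_ge0 hd] := coord_sqr_le.
exists (\sum_j \sum_i `|M i j| * d) => [|v].
  by apply: sumr_ge0 => j _; apply: sumr_ge0 => i _; apply: mulr_ge0.
rewrite mxE mulr_suml; apply: ler_sum => j _.
rewrite !mxE mulr_suml big_distrl /=; apply: ler_sum => i _.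
apply: le_trans (ler_norm _) _; rewrite -mulrA !normrM mulrCA -[leRHS]mulrA.
apply: ler_wpM2l; first exact: normr_ge0.
by apply: mul_le_of_sqr_le; rewrite real_normK ?num_real.
Qed.

End InnerProduct.

Section LinearMaps.
Context {R : realType} {n m : nat} {A : 'M[R]_n} {B : 'M[R]_m}.

Lemma mulmx_ip_le (L : 'M[R]_(m, n)) : is_inner_product B ->
  exists2 c, 0 <= c & forall v, ip A (v *m L) (v *m L) <= c * ip B v v.
Proof.
move=> hB; have [c c_ge0 hc] := quad_form_le hB (L *m A *m L^T).
by exists c => // v; have := hc v; rewrite /ip trmx_mul !mulmxA.
Qed.

Lemma conf_subspace_rank {S C r} : conf_subspace A B S C r -> \rank C = \rank S.
Proof.
case=> [[sumT _] /mxdirect_addsP capK0 _].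
have := mxrank_disjoint_sum capK0; rewrite sumT mxrank1 mxrank_ker.
by have := rank_leq_row S; lia.
Qed.

Hypothesis hA : is_inner_product A.

Lemma opnorm_le_sqr {D : 'M[R]_(n, m)} {e : R} : 0 <= e -> opnorm_le A B D e ->
  forall u, ip B (u *m D) (u *m D) <= e ^+ 2 * ip A u u.
Proof.
move=> e_ge0 close u; move/(_ u): close => close.
rewrite -ler_sqrt ?mulr_ge0 ?sqr_ge0 ?ipxx_ge0 //.
by rewrite sqrtrM ?sqr_ge0 // sqrtr_sqr ger0_norm.
Qed.

End LinearMaps.

Lemma capmx_eq0 (F : fieldType) n m1 m2 (X : 'M[F]_(m1, n)) (Y : 'M[F]_(m2, n)) :
  (forall v : 'rV_n, (v <= X)%MS -> (v <= Y)%MS -> v = 0) -> (X :&: Y)%MS = 0.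
Proof.
move=> h; apply/row_matrixP => i; rewrite row0.
by apply: h; apply: submx_trans (row_sub i _) _; rewrite ?capmxSl ?capmxSr.
Qed.

Section RankSemicontinuity.
Context {R : realType} {n m : nat} {A : 'M[R]_n} {B : 'M[R]_m}.
Hypotheses (hA : is_inner_product A) (hB : is_inner_product B).
Variable T : 'M[R]_(n, m).

Lemma rank_lower_semicontinuous :
  exists2 e, 0 < e & forall S, opnorm_le A B (S - T) e -> (\rank T <= \rank S)%N.
Proof.
have [c c_ge0 hc] := mulmx_ip_le (A := A) (pinvmx T) hB.
have c1_gt0 : 0 < c + 1 by lra.
have [e e_gt0] : exists2 e, 0 < e & e ^+ 2 < (c + 1)^-1.
  by apply: exists_sqr_lt; rewrite invr_gt0.
rewrite -div1r ltr_pdivlMr // => ec.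
exists e => // S close.
have capT0 : (T :&: kermx (pinvmx T *m S))%MS = 0.
  apply: capmx_eq0 => v vT /sub_kermxP; rewrite mulmxA => vPS0.
  have := opnorm_le_sqr hA (ltW e_gt0) close (v *m pinvmx T).
  rewrite mulmxBr vPS0 (mulmxKpV vT) sub0r ipNl (ipNr hB) opprK => hv.
  have Pv_le := hc v.
  have Pv_ge0 := ipxx_ge0 hA (v *m pinvmx T).
  have v_ge0 := ipxx_ge0 hB v.
  by apply/eqP; rewrite -(ipxx_le0 hB); nra.
have := mxrank_mul_ker T (pinvmx T *m S); rewrite capT0 mxrank0 addn0.
by have := mxrankM_maxr T (pinvmx T *m S); have := mxrankM_maxr (pinvmx T) S; lia.
Qed.

Lemma conformal_rank_upper_semicontinuous {p : R} : 0 < p ->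
  exists2 e, 0 < e & forall S C r, conf_subspace A B S C r -> p <= r ->
    opnorm_le A B (S - T) e -> (\rank S <= \rank T)%N.
Proof.
move=> p_gt0; have [e e_gt0 ep] := exists_sqr_lt p_gt0.
exists e => // S C r confC pr close.
have capK0 : (C :&: kermx T)%MS = 0.
  apply: capmx_eq0 => v vC /sub_kermxP vT0.
  have := opnorm_le_sqr hA (ltW e_gt0) close v.
  rewrite mulmxBr vT0 subr0; case: confC => _ _ -> // hv.
  have v_ge0 := ipxx_ge0 hA v.
  by apply/eqP; rewrite -(ipxx_le0 hA); nra.
rewrite -(conf_subspace_rank confC).
have := mxrank_disjoint_sum capK0; rewrite mxrank_ker.
by have := rank_leq_col (C + kermx T)%MS; have := rank_leq_row T; lia.
Qed.

End RankSemicontinuity.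

Theorem mainTheorem6 (R : realType) (n m : nat) (A : 'M[R]_n) (B : 'M[R]_m)
    (hA : is_inner_product A) (hB : is_inner_product B)
    (T : 'M[R]_(n, m)) (Tk : nat -> 'M[R]_(n, m))
    (hgeo : forall k, geometric A B (Tk k))
    (hconv : op_converges A B Tk T)
    (p : R) (hp : 0 < p)
    (hfac : forall k, exists rk : R, conformality_factor A B (Tk k) rk /\ p <= rk) :
  exists K : nat, forall k : nat, (K < k)%N -> \rank (Tk k) = \rank T.
Proof.
have [e1 e1_gt0 rank_le] := conformal_rank_upper_semicontinuous (B := B) hA T hp.
have [e2 e2_gt0 rank_ge] := rank_lower_semicontinuous hA hB T.
have [N1 close1] := hconv e1 e1_gt0.
have [N2 close2] := hconv e2 e2_gt0.
exists (maxn N1 N2) => k /ltnW; rewrite geq_max => /andP[kN1 kN2].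
have [rk [[_ [C confC]] prk]] := hfac k.
apply/eqP; rewrite eqn_leq (rank_le _ _ _ confC prk (close1 k kN1)).
exact: rank_ge (close2 k kN2).
Qed.
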